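(* Let $\mathcal A$ be a (commutative or noncommutative, unital, nonzero) ring. Then $\mathcal A$ as a $\mathbb Z$-algebra is strongly simple if and only if $\mathcal A\simeq\mathbb Z/p\mathbb Z$ for some prime $p$.
   Context: An additive subgroup $M$ of a ring $\mathcal A$ is a (two-sided) Mathieu subspace if whenever $a\in\mathcal A$ satisfies $a^m\in M$ for all $m\ge1$, then for all $b,c\in\mathcal A$ there is $N$ with $ba^mc\in M$ for all $m\ge N$. $\mathcal A$ is strongly simple (as a $\mathbb Z$-algebra) if its only Mathieu subspaces are $0$ and $\mathcal A$. *)

From HB Require Import structures.
From mathcomp Require Import all_boot all_algebra.
Set Implicit Arguments. Unset Strict Implicit. Unset Printing Implicit Defensive.
Import GRing.Theory.
Local Open Scope ring_scope.

Definition additive_subgroup (A : nzRingType) (M : A -> Prop) : Prop :=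
  M 0 /\ (forall x y, M x -> M y -> M (x - y)).

(* Two-sided Mathieu subspace (as Z-module = additive subgroup). *)
Definition mathieu_subspace (A : nzRingType) (M : A -> Prop) : Prop :=
  additive_subgroup M /\
  forall a : A, (forall m : nat, (1 <= m)%N -> M (a ^+ m)) ->
    forall b c : A, exists N : nat, forall m : nat, (N <= m)%N -> M (b * a ^+ m * c).

Definition strongly_simple (A : nzRingType) : Prop :=
  forall M : A -> Prop, mathieu_subspace M ->
    (forall x, M x <-> x = 0) \/ (forall x, M x).

Definition ring_iso_Zp (A : nzRingType) (p : nat) : Prop :=
  exists f : A -> 'Z_p, monoid_morphism f /\ zmod_morphism f /\ bijective f.

From HB Require Import structures.
From mathcomp Require Import all_boot all_algebra.
From Stdlib Require Import Classical.
From mathcomp Require Import ring zify.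
(* Every two-sided ideal is a Mathieu subspace, so a strongly simple ring is
   simple: its nonzero central elements (in particular the nonzero integers)
   are invertible, and, by a Peirce decomposition, its idempotents are 0 and 1.
   For each x, the group Z x is a Mathieu subspace unless some a = k x satisfies
   a^2 = l x with a <> 0; then k^2 x / l is an idempotent, so x is a fraction of
   integers.  Hence A is generated by 1 up to fractions.  In characteristic 0
   this would make the elements of 2-adic valuation at least 1 a proper nonzero
   Mathieu subspace, so the characteristic is a prime p and Z/pZ -> A is onto.
   Conversely, every nonzero element of Z/pZ generates its additive group. *)

Set Implicit Arguments. Unset Strict Implicit. Unset Printing Implicit Defensive.
Import GRing.Theory.
Local Open Scope ring_scope.

Section Generalities.
Variable A : nzRingType.
Implicit Types (M : A -> Prop) (x y z c : A).

Definition two_sided_ideal M :=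
  additive_subgroup M /\ forall y z, M y -> M (z * y) /\ M (y * z).

Definition central c := forall z, GRing.comm c z.

Definition int_multiples x y := exists k : int, y = x *~ k.

Definition rational x :=
  exists (K : nat) (J : int), (K%:R : A) != 0 /\ x *+ K = J%:~R.

Lemma additive_subgroupMn M x n : additive_subgroup M -> M x -> M (x *+ n).
Proof.
move=> [M0 MB] Mx; elim: n => [|n IHn]; first by rewrite mulr0n.
have MN : M (- (x *+ n)) by rewrite -sub0r; apply: MB.
by rewrite mulrS -[x *+ n]opprK; apply: MB.
Qed.

Lemma ideal_mathieu M : two_sided_ideal M -> mathieu_subspace M.
Proof.
move=> [HM Mmul]; split=> // a Ma b c; exists 1%N => -[//|m] _.
have Ma1 := Ma 1%N isT; rewrite expr1 in Ma1.
by rewrite exprS -!mulrA; apply: (Mmul _ b (Mmul _ _ Ma1).2).1.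
Qed.

Lemma central_int k : central k%:~R.
Proof. by move=> z; rewrite /GRing.comm commr_int. Qed.

Lemma central_nat n : central n%:R.
Proof. by move=> z; rewrite /GRing.comm commr_nat. Qed.

Lemma central_left_inv c w : central c -> w * c = 1 -> central w.
Proof.
move=> cc wc z; have cw : c * w = 1 by rewrite cc.
by rewrite /GRing.comm -[w * z]mulr1 -cw !mulrA -[w * z * c]mulrA -cc !mulrA wc mul1r.
Qed.

Lemma int_multiples_subgroup x : additive_subgroup (int_multiples x).
Proof.
split; first by exists 0; rewrite mulr0z.
by move=> _ _ [k ->] [l ->]; exists (k - l); rewrite mulrzBr.
Qed.

Lemma int_multiples_mathieu x :
    (forall k l, (x *~ k) * (x *~ k) = x *~ l -> (x *~ k) * (x *~ k) = 0) ->
  mathieu_subspace (int_multiples x).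
Proof.
move=> sqr0; split=> [|a Ha b c]; first exact: int_multiples_subgroup.
exists 2%N => -[//|[//|m]] _; exists 0.
have [k ak] := Ha 1%N isT; have [l al] := Ha 2%N isT.
rewrite expr1 in ak; rewrite expr2 ak in al.
by rewrite mulr0z !exprS [a * (a * _)]mulrA ak (sqr0 _ _ al) mul0r mulr0 mul0r.
Qed.

Lemma rational_int x (k l : int) :
  (k%:~R : A) != 0 -> x *~ k = l%:~R -> rational x.
Proof.
case: k => n; first by exists n, l.
rewrite NegzE intrN oppr_eq0 mulrNz => n0 xn.
by exists n.+1, (- l); rewrite intrN -xn opprK.
Qed.

Lemma cyclic_strongly_simple :
  (forall x y, x != 0 -> exists n, y = x *+ n) -> strongly_simple A.
Proof.
move=> cyc M [HM _].
case: (classic (exists x, M x /\ x != 0)) => [[x [Mx x0]]|noM].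
  by right=> y; have [n ->] := cyc x y x0; apply: additive_subgroupMn.
left=> y; split=> [My|->]; last exact: HM.1.
by apply/eqP; apply: contraT => y0; case: noM; exists y.
Qed.

End Generalities.

Lemma Zp_unit_of_neq0 p (z : 'Z_p) : prime p -> z != 0 -> z \is a GRing.unit.
Proof.
move=> p_pr z0; have p_gt1 := prime_gt1 p_pr.
rewrite -(natr_Zp z) unitZpE // prime_coprime //.
have z_gt0 : (0 < z)%N by rewrite lt0n; apply: contra z0 => /eqP z0; apply/eqP/val_inj.
have z_lt_p : (z < p)%N by rewrite -{2}(Zp_cast p_gt1).
by apply/negP => /(dvdn_leq z_gt0); rewrite leqNgt z_lt_p.
Qed.

Lemma iso_Zp_cyclic (A : nzRingType) p : prime p -> ring_iso_Zp A p ->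
  forall x y : A, x != 0 -> exists n, y = x *+ n.
Proof.
move=> p_pr [f [_ [fB [g fK gK]]]] x y x0.
pose fA : {additive A -> 'Z_p} := HB.pack f (GRing.isZmodMorphism.Build _ _ f fB).
have fx0 : f x != 0 by apply: contra x0 => /eqP fx0; rewrite -(fK x) fx0 -(raddf0 fA) /= fK.
pose z : 'Z_p := f y / f x; exists z; apply: (can_inj fK).
rewrite [RHS](raddfMn fA) -mulr_natr natr_Zp /z mulrC divrK //.
exact: Zp_unit_of_neq0.
Qed.

Section PrimeCharacteristic.
Variables (A : nzRingType) (p : nat).
Hypotheses (p_gt1 : (1 < p)%N) (pA : p%:R = 0 :> A).

Lemma natr_modp n : (n %% p)%:R = n%:R :> A.
Proof. by rewrite {2}(divn_eq n p) natrD natrM pA mulr0 add0r. Qed.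

Definition natr_of_Zp (z : 'Z_p) : A := (z : nat)%:R.

Lemma natr_of_Zp_nat n : natr_of_Zp n%:R = n%:R.
Proof. by rewrite /natr_of_Zp val_Zp_nat // natr_modp. Qed.

Lemma natr_of_Zp_nmod_morphism : nmod_morphism natr_of_Zp.
Proof.
split=> [//|x y].
by rewrite -[x]natr_Zp -[y]natr_Zp -natrD !natr_of_Zp_nat natrD.
Qed.

Lemma natr_of_Zp_monoid_morphism : monoid_morphism natr_of_Zp.
Proof.
split=> [|x y]; first by have := natr_of_Zp_nat 1; rewrite !mulr1n.
by rewrite -[x]natr_Zp -[y]natr_Zp -natrM !natr_of_Zp_nat natrM.
Qed.

HB.instance Definition _ :=
  GRing.isNmodMorphism.Build _ _ natr_of_Zp natr_of_Zp_nmod_morphism.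
HB.instance Definition _ :=
  GRing.isMonoidMorphism.Build _ _ natr_of_Zp natr_of_Zp_monoid_morphism.

Lemma natr_of_Zp_inj :
  (forall n, (0 < n)%N -> n%:R = 0 :> A -> (p <= n)%N) -> injective natr_of_Zp.
Proof.
move=> pmin; apply: raddf_inj => z z0; apply/val_inj/eqP => /=.
have z_lt_p : (z < p)%N by rewrite -{2}(Zp_cast p_gt1).
by apply: contraT; rewrite -lt0n => /pmin/(_ z0); rewrite leqNgt z_lt_p.
Qed.

Lemma natr_of_Zp_surj : prime p -> (forall x : A, rational x) ->
  forall x, exists z, natr_of_Zp z = x.
Proof.
move=> p_pr rat x; have [K [J [K0]]] := rat x; rewrite -mulr_natr => xK.
have Ku : (K%:R : 'Z_p) \is a GRing.unit.
  rewrite unitZpE // prime_coprime //; apply: contra K0 => /dvdnP [q ->].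
  by rewrite natrM pA mulr0.
exists (J%:~R / K%:R); rewrite rmorphM rmorph_int -xK.
by rewrite -(natr_of_Zp_nat K) -mulrA -rmorphM divrr // rmorph1 mulr1.
Qed.

Lemma ring_iso_Zp_natr_of_Zp :
  injective natr_of_Zp -> (forall x, exists z, natr_of_Zp z = x) -> ring_iso_Zp A p.
Proof.
move=> inj surj.
have surjb x : exists z, natr_of_Zp z == x by have [z /eqP] := surj x; exists z.
pose f x := xchoose (surjb x).
have fK : cancel f natr_of_Zp by move=> x; apply/eqP/(xchooseP (surjb x)).
have natr_of_ZpK : cancel natr_of_Zp f by move=> z; apply: inj; rewrite fK.
exists f; split; first exact: can2_monoid_morphism natr_of_ZpK fK.
by split; [exact: can2_zmod_morphism natr_of_ZpK fK | exists natr_of_Zp].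
Qed.

End PrimeCharacteristic.

Section CharacteristicZero.
Variable A : nzRingType.
Hypothesis char0 : forall n, (0 < n)%N -> (n%:R : A) != 0.
Hypothesis all_rational : forall x : A, rational x.

(* Thinking of A as Q: the fractions of 2-adic valuation at least 1. *)
Definition even_fraction (y : A) :=
  exists (v : nat) (k : int), odd v /\ y *+ v = (2 * k)%:~R.

Lemma intr_char0_eq0 (z : int) : (z%:~R : A) = 0 -> z = 0.
Proof.
case: z => [[//|n]|n] /eqP; first by rewrite (negPf (char0 _)).
by rewrite NegzE intrN oppr_eq0 (negPf (char0 _)).
Qed.

Lemma even_fraction_subgroup : additive_subgroup even_fraction.
Proof.
split; first by exists 1%N, 0; rewrite mulr0 mulr0z.
move=> y z [v [k [v_odd yv]]] [w [l [w_odd zw]]].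
exists (v * w)%N, (k * w%:Z - l * v%:Z); split; first by rewrite oddM v_odd.
rewrite mulrnBl mulrnA yv mulnC mulrnA zw !pmulrn -!mulrzA -intrB.
by congr _%:~R; ring.
Qed.

Lemma even_fraction_mathieu : mathieu_subspace even_fraction.
Proof.
split=> [|a Ha b c]; first exact: even_fraction_subgroup.
have [v [k [v_odd av]]] := Ha 1%N isT; rewrite expr1 in av.
have [K [J [K0 bcK]]] := all_rational (b * c).
have K_gt0 : (0 < K)%N by rewrite lt0n; apply: contra K0 => /eqP ->.
have [r r_odd Kr] := pfactor_coprime (isT : prime 2) K_gt0.
rewrite coprime2n in r_odd; move: (logn 2 K) Kr => s Kr.
exists s.+1 => m /subnK; rewrite addnS; set t := (m - _)%N => mE.
have pow2km : (2 * k) ^+ m = 2 * (2 ^+ t * k ^+ m) * (2 ^ s)%:R.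
  by rewrite natrX -mE exprMn exprS exprD; ring.
exists (v ^ m * r)%N, (2 ^+ t * k ^+ m * J).
split; first by rewrite oddM oddX v_odd r_odd orbT.
rewrite mulrnA -mulrnAl -mulrnAr -exprMn_n av -rmorphXn commr_int -!mulrA.
rewrite -mulrnAr pow2km intrM mulrz_nat -mulrA (mulr_natl (b * c *+ r)) -mulrnA -Kr bcK.
by rewrite -intrM; congr _%:~R; ring.
Qed.

Lemma char0_rational_not_strongly_simple : ~ strongly_simple A.
Proof.
move=> SS; case: (SS _ even_fraction_mathieu) => [trivial|full].
  have /trivial/eqP : even_fraction 2 by exists 1%N, 1.
  exact/negP/char0.
have [v [k [v_odd v2k]]] := full 1.
have : ((v%:Z - 2 * k)%:~R : A) = 0 by rewrite intrB -pmulrn v2k subrr.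
move/intr_char0_eq0/eqP; rewrite subr_eq0 => /eqP/(congr1 absz) /= vE.
by move: v_odd; rewrite vE abszM oddM.
Qed.

End CharacteristicZero.

Section StronglySimple.
Variable A : nzRingType.
Hypothesis A_ss : strongly_simple A.

Lemma central_left_invertible (c : A) : central c -> c != 0 -> exists w, w * c = 1.
Proof.
move=> cc c0; pose M y := exists z, y = z * c.
have idM : two_sided_ideal M.
  split; [split|].
  - by exists 0; rewrite mul0r.
  - by move=> _ _ [y ->] [z ->]; exists (y - z); rewrite mulrBl.
  - move=> _ z [y ->]; split; first by exists (z * y); rewrite mulrA.
    by exists (y * z); rewrite -mulrA cc mulrA.
case: (A_ss (ideal_mathieu idM)) => [triv|full].
  by case/eqP: c0; apply/triv; exists 1; rewrite mul1r.
by have [w w1] := full 1; exists w.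
Qed.

Lemma mulf_central_eq0 (c x : A) : central c -> x * c = 0 -> x = 0 \/ c = 0.
Proof.
move=> cc xc0; case: (eqVneq c 0) => [|c0]; [by right | left].
have [w wc] := central_left_invertible cc c0.
by rewrite -[x]mulr1 -wc -(cc w) mulrA xc0 mul0r.
Qed.

Lemma sqr_eq0 (x : A) : x * x = 0 -> x = 0.
Proof.
move=> xx0; have sqr0 k : (x *~ k) * (x *~ k) = 0.
  by rewrite mulrzAl mulrzAr xx0 !mul0rz.
case: (A_ss (int_multiples_mathieu (fun k _ _ => sqr0 k))) => [triv|full].
  by apply/triv; exists 1; rewrite mulr1z.
have [k k1] := full 1.
by have := sqr0 k; rewrite -k1 mulr1 => /eqP; rewrite oner_eq0.
Qed.

Lemma idempotent_central (e : A) : e * e = e -> central e.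
Proof.
move=> ee z; rewrite /GRing.comm.
have e1e : e * (1 - e) = 0 by rewrite mulrBr mulr1 ee subrr.
have ee1 : (1 - e) * e = 0 by rewrite mulrBl mul1r ee subrr.
have ez : e * z * (1 - e) = 0.
  by apply: sqr_eq0; rewrite !mulrA -[e * z * (1 - e) * e]mulrA ee1 mulr0 !mul0r.
have ze : (1 - e) * z * e = 0.
  by apply: sqr_eq0; rewrite !mulrA -[(1 - e) * z * e * (1 - e)]mulrA e1e mulr0 !mul0r.
rewrite mulrBr mulr1 in ez; rewrite !mulrBl mul1r in ze.
move/eqP: ez; rewrite subr_eq0 => /eqP ->.
by move/eqP: ze; rewrite subr_eq0 => /eqP ->.
Qed.

Lemma idempotent_eq0_or_1 (e : A) : e * e = e -> e = 0 \/ e = 1.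
Proof.
move=> ee; case: (eqVneq e 0) => [|e0]; [by left | right].
have [w we] := central_left_invertible (idempotent_central ee) e0.
by rewrite -we -{2}ee mulrA we mul1r.
Qed.

Lemma square_multiple_rational (x : A) (k l : int) :
  (x *~ k) * (x *~ k) = x *~ l -> x *~ k = 0 \/ rational x.
Proof.
move=> sq; set y := x *~ (k * k).
have yy : y * y = y *~ l.
  rewrite /y mulrzA mulrzAl mulrzAr sq.
  by rewrite -!mulrzA; congr (x *~ _); ring.
have y_0_l : y = 0 \/ y = l%:~R.
  case: (eqVneq (l%:~R : A) 0) => [l0|l0].
    by left; apply: sqr_eq0; rewrite yy -mulrzr l0 mulr0.
  have [u ul] := central_left_invertible (central_int l) l0.
  have uc := central_left_inv (central_int l) ul.
  have yu_idem : (y * u) * (y * u) = y * u.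
    rewrite mulrA -[y * u * y]mulrA (uc y) mulrA yy -mulrzr -(mulrA y).
    by rewrite -(uc l%:~R) ul mulr1.
  case: (idempotent_eq0_or_1 yu_idem) => [yu|yu]; [left | right].
    by rewrite -[LHS]mulr1 -{1}ul mulrA yu mul0r.
  by rewrite -[LHS]mulr1 -{1}ul mulrA yu mul1r.
case: (eqVneq (k%:~R : A) 0) => [k0|k0]; first by left; rewrite -mulrzr k0 mulr0.
have kk0 : ((k * k)%:~R : A) != 0.
  by rewrite intrM; apply/eqP => /(mulf_central_eq0 (central_int k)) [] /eqP; rewrite (negPf k0).
case: y_0_l => [y0|yl]; last by right; apply: rational_int kk0 yl.
left; rewrite /y -mulrzr in y0.
case: (mulf_central_eq0 (central_int _) y0) => [->|/eqP]; first by rewrite mul0rz.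
by rewrite (negPf kk0).
Qed.

Lemma strongly_simple_rational (x : A) : rational x.
Proof.
case: (classic (rational x)) => // not_rat.
have sqr0 k l : (x *~ k) * (x *~ k) = x *~ l -> (x *~ k) * (x *~ k) = 0.
  by case/square_multiple_rational => [->|//]; rewrite mul0r.
case: (A_ss (int_multiples_mathieu sqr0)) => [triv|full].
  have -> : x = 0 by apply/triv; exists 1; rewrite mulr1z.
  by exists 1%N, 0; rewrite mul0rn oner_neq0.
have [k k1] := full 1; apply: (@rational_int _ _ k 1); last by rewrite -k1.
by apply/eqP => k0; move: (oner_neq0 A); rewrite k1 -mulrzr k0 mulr0 eqxx.
Qed.

Lemma strongly_simple_char_prime p : (0 < p)%N -> p%:R = 0 :> A ->
  (forall n, (0 < n)%N -> n%:R = 0 :> A -> (p <= n)%N) -> prime p.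
Proof.
move=> p_gt0 pA pmin.
have p_gt1 : (1 < p)%N.
  rewrite ltn_neqAle p_gt0 andbT; apply/eqP => p1.
  by move/eqP: pA; rewrite -p1 mulr1n oner_eq0.
apply/primeP; split=> // d /dvdnP [k pE].
have d_gt0 : (0 < d)%N by move: p_gt0; rewrite pE muln_gt0 => /andP [].
have k_gt0 : (0 < k)%N by move: p_gt0; rewrite pE muln_gt0 => /andP [].
have : (k%:R * d%:R : A) = 0 by rewrite -natrM -pE.
case/(mulf_central_eq0 (central_nat d)) => [/(pmin k k_gt0)|/(pmin d d_gt0)] le_p.
  by rewrite pE in le_p; nia.
by rewrite pE in le_p *; nia.
Qed.

Lemma strongly_simple_iso_Zp : exists p, prime p /\ ring_iso_Zp A p.
Proof.
case: (classic (exists n, (0 < n)%N && (n%:R == 0 :> A))) => [charp|char0].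
  case: (ex_minnP charp) => p /andP [p_gt0 /eqP pA] pmin.
  have pmin' n : (0 < n)%N -> n%:R = 0 :> A -> (p <= n)%N.
    by move=> n_gt0 n0; apply: pmin; rewrite n_gt0 n0 eqxx.
  have p_pr := strongly_simple_char_prime p_gt0 pA pmin'.
  exists p; split=> //; have p_gt1 := prime_gt1 p_pr.
  apply: (ring_iso_Zp_natr_of_Zp p_gt1 pA); first exact: natr_of_Zp_inj.
  exact: natr_of_Zp_surj strongly_simple_rational.
case: (char0_rational_not_strongly_simple _ strongly_simple_rational A_ss) => n n_gt0.
by apply/negP => n0; apply: char0; exists n; rewrite n_gt0 n0.
Qed.

End StronglySimple.

Theorem corollary6p8 (A : nzRingType) :
  strongly_simple A <-> exists p : nat, prime p /\ ring_iso_Zp A p.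
Proof.
split; first exact: strongly_simple_iso_Zp.
case=> p [p_pr iso]; apply: cyclic_strongly_simple.
exact: iso_Zp_cyclic iso.
Qed.
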